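(* Every finite-dimensional complex regular evolution algebra $\mathcal{E}$ admits a non-zero idempotent, i.e. an element $u\neq 0$ with $u^2=u$.
   Context: An evolution algebra over $\mathbb{C}$ is a $\mathbb{C}$-algebra $\mathcal{E}$ admitting a basis $\{e_1,\dots,e_n\}$ (a natural basis) such that $e_ie_j=0$ for all $i\neq j$. $\mathcal{E}$ is regular if $\mathcal{E}=\mathcal{E}^2$, equivalently the structure matrix $(a_{ij})$ defined by $e_i^2=\sum_j a_{ij}e_j$ is invertible. *)

From HB Require Import structures.
From mathcomp Require Import all_boot all_order all_algebra.
From mathcomp Require Import complex.
From mathcomp Require Import reals.
Set Implicit Arguments. Unset Strict Implicit. Unset Printing Implicit Defensive.
Import Order.TTheory GRing.Theory Num.Theory.
Local Open Scope ring_scope.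

(* An n-dimensional evolution algebra over a field K with natural basis
   e_0, ..., e_(n-1) is determined by its structure matrix A = (a_ij),
   e_i^2 = \sum_j a_ij e_j, e_i e_j = 0 (i <> j).  Elements are
   represented by their coordinate row vectors x = \sum_i x_i e_i; then
   x y = \sum_i x_i y_i e_i^2 = (x o y) *m A, with o the entrywise product. *)
Definition evo_mul (K : fieldType) (n : nat) (A : 'M[K]_n) (x y : 'rV[K]_n)
  : 'rV[K]_n :=
  (\row_j (x 0 j * y 0 j)) *m A.

(* Regular: E = E^2, equivalently the structure matrix is invertible. *)
Definition evo_regular (K : fieldType) (n : nat) (A : 'M[K]_n) : bool :=
  A \in unitmx.

From HB Require Import structures.
From mathcomp Require Import all_boot all_order all_algebra.
From mathcomp Require Import complex.
From mathcomp Require Import reals.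
Set Implicit Arguments. Unset Strict Implicit. Unset Printing Implicit Defensive.
Import GRing.Theory.
Local Open Scope ring_scope.

(* Put B := A^-1, so that u is idempotent iff u_j^2 = \sum_i u_i B_ij for all j.
   Multiplication by x_j in K[x_1, ..., x_m] / (x_j^2 - \sum_i x_i B_ij) acts
   on the span of the square-free monomials x_S; these operators commute and
   preserve the ideal I spanned by the x_S with S non-empty.  A common
   eigenvector of their transposes on I is a linear form p on I with
   p (x_j f) = lam_j p f, and then lam solves the system.  Because
   x_j = \sum_i A_ij x_i^2, every x_S lies in x_1 I + ... + x_m I, so lam = 0
   would force p = 0. *)

Lemma quadratic_root_of_comm_mx (K : numClosedFieldType) (m N : nat)
    (M : 'I_m -> 'M[K]_N) (B : 'M[K]_m) :
    (0 < N)%N -> (forall j k, M j *m M k = M k *m M j) ->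
    (forall j, M j *m M j = \sum_i B i j *: M i) ->
    (forall p : 'rV_N, (forall i, p *m M i = 0) -> p = 0) ->
  exists2 lam : 'rV[K]_m, lam != 0 & \row_j (lam 0 j * lam 0 j) = lam *m B.
Proof.
move=> N_gt0 MC Msq Mker.
have Ms_comm : {in [seq M j | j <- enum 'I_m] &, forall P Q, comm_mx P Q}.
  by move=> _ _ /mapP[j _ ->] /mapP[k _ ->]; apply: MC.
have [p p_neq0 /allP p_eigen] := common_eigenvector N_gt0 Ms_comm.
have /fin_all_exists[lam pM] : forall j, exists l, p *m M j = l *: p.
  by move=> j; apply/sub_rVP/p_eigen/map_f; rewrite mem_enum.
exists (\row_j lam j).
  apply: contra_neq p_neq0 => lam0; apply: Mker => i.
  have := congr1 (fun r : 'rV_m => r 0 i) lam0; rewrite !mxE => lam_i0.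
  by rewrite pM lam_i0 scale0r.
apply/rowP => j; rewrite !mxE.
have : (lam j * lam j) *: p = (\sum_i lam i * B i j) *: p.
  have -> : (lam j * lam j) *: p = p *m (M j *m M j).
    by rewrite mulmxA pM -scalemxAl pM scalerA.
  rewrite Msq mulmx_sumr scaler_suml.
  by apply: eq_bigr => i _; rewrite -scalemxAr pM scalerA mulrC.
move/eqP; rewrite -subr_eq0 -scalerBl scaler_eq0 (negbTE p_neq0) orbF subr_eq0.
by move/eqP->; apply: eq_bigr => i _; rewrite mxE.
Qed.

Section QuadraticModel.
Variables (K : fieldType) (m : nat) (B : 'M[K]_m).
Local Notation T := {set 'I_m}.
Local Notation V := {ffun T -> K^o}.

(* [monom S] is the monomial x_S and [mulx j S] is x_j x_S, reduced by
   x_j^2 = \sum_i B_ij x_i; the fuel [d] of [mulx_rec] only needs to be #|S|. *)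
Definition monom (S : T) : V := [ffun U => (U == S)%:R].

Fixpoint mulx_rec (d : nat) (j : 'I_m) (S : T) : V :=
  if d is d'.+1 then
    if j \in S then \sum_i B i j *: mulx_rec d' i (S :\ j) else monom (j |: S)
  else monom (j |: S).

Definition mulx (j : 'I_m) (S : T) : V := mulx_rec #|S| j S.

Definition mulX (j : 'I_m) (v : V) : V := \sum_(S : T) v S *: mulx j S.

Lemma mulX_is_linear j : linear (mulX j).
Proof.
move=> a v w; rewrite /mulX scaler_sumr -big_split; apply: eq_bigr => S _.
by rewrite !ffunE scalerDl scalerA.
Qed.

HB.instance Definition _ j :=
  GRing.isLinear.Build K V V *:%R (mulX j) (mulX_is_linear j).

Lemma mulx_notin j (S : T) : j \notin S -> mulx j S = monom (j |: S).
Proof. by rewrite /mulx; case: #|S| => //= d /negbTE ->. Qed.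

Lemma mulx_in j (S : T) : j \in S -> mulx j S = \sum_i B i j *: mulx i (S :\ j).
Proof. by move=> jS; rewrite /mulx (cardsD1 j S) jS /= jS. Qed.

Lemma mulX_monom j (S : T) : mulX j (monom S) = mulx j S.
Proof.
rewrite /mulX (bigD1 S) //= big1 ?addr0; first by rewrite ffunE eqxx scale1r.
by move=> U /negbTE; rewrite ffunE => ->; rewrite scale0r.
Qed.

Lemma mulX_sumZ j (I : finType) (c : I -> K) (F : I -> V) :
  mulX j (\sum_i c i *: F i) = \sum_i c i *: mulX j (F i).
Proof. by rewrite linear_sum; apply: eq_bigr => i _; rewrite linearZ. Qed.

Section CommutationStep.
Variable S : T.
Hypothesis IH : forall U : T, (#|U| < #|S|)%N ->
  forall j k, mulX j (mulx k U) = mulX k (mulx j U).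

Lemma mulx_comm_in_notin j k : k \in S -> j \notin S ->
  mulX j (mulx k S) = mulX k (mulx j S).
Proof.
move=> kS jS; have jk : j != k by apply: contraNneq jS => ->.
rewrite mulx_in // mulX_sumZ (mulx_notin jS) mulX_monom.
rewrite mulx_in ?in_setU ?kS ?orbT //.
apply: eq_bigr => i _; rewrite IH ?(cardsD1 k S) ?kS //.
rewrite mulx_notin ?mulX_monom ?in_setD1 ?(negbTE jS) ?andbF //.
congr (_ *: mulx _ _); apply/setP => x; rewrite !inE.
by case: (eqVneq x j) => [->|]; rewrite ?jk ?andbT.
Qed.

Lemma mulx_comm_in_in j k : j \in S -> k \in S ->
  mulX j (mulx k S) = mulX k (mulx j S).
Proof.
move=> jS kS; have [-> // | jk] := eqVneq j k.
have expand a b : a != b -> a \in S -> b \in S ->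
    mulX a (mulx b S) =
    \sum_i \sum_l B i b * B l a *: mulX i (mulx l (S :\ b :\ a)).
  move=> ab aS bS; rewrite mulx_in // mulX_sumZ; apply: eq_bigr => i _.
  rewrite IH ?(cardsD1 b S) ?bS // mulx_in ?in_setD1 ?ab // mulX_sumZ scaler_sumr.
  by apply: eq_bigr => l _; rewrite scalerA.
rewrite expand // expand 1?eq_sym // [RHS]exchange_big /=.
apply: eq_bigr => i _; apply: eq_bigr => l _; rewrite mulrC IH.
  by rewrite !setDDl setUC.
apply: leq_ltn_trans (subset_leq_card (subsetDl _ _)) _.
by rewrite (cardsD1 k S) kS.
Qed.

End CommutationStep.

Lemma mulx_comm (S : T) j k : mulX j (mulx k S) = mulX k (mulx j S).
Proof.
have [d] := ubnP #|S|; elim: d S j k => // d IHd S j k ltSd.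
have IH (U : T) : (#|U| < #|S|)%N ->
    forall a b, mulX a (mulx b U) = mulX b (mulx a U).
  by move=> ltUS a b; apply: IHd; apply: leq_trans ltUS _.
case: (boolP (k \in S)) => kS; case: (boolP (j \in S)) => jS.
- exact: mulx_comm_in_in.
- exact: mulx_comm_in_notin.
- exact/esym/mulx_comm_in_notin.
have [-> // | jk] := eqVneq j k.
rewrite (mulx_notin kS) (mulx_notin jS) !mulX_monom.
rewrite !mulx_notin ?in_setU1 ?negb_or ?jk ?kS ?jS 1?eq_sym ?jk //.
by rewrite setUCA.
Qed.

Lemma mulx_sq j (S : T) : mulX j (mulx j S) = \sum_i B i j *: mulx i S.
Proof.
case: (boolP (j \in S)) => jS.
  rewrite mulx_in // mulX_sumZ; apply: eq_bigr => i _.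
  by rewrite mulx_comm mulx_notin ?setD1K ?in_setD1 ?eqxx // mulX_monom.
rewrite mulx_notin // mulX_monom mulx_in ?setU11 //; apply: eq_bigr => i _.
by rewrite setU1K.
Qed.

Lemma mulX_sq j (v : V) : mulX j (mulX j v) = \sum_i B i j *: mulX i v.
Proof.
rewrite mulX_sumZ; under eq_bigr => S _ do rewrite mulx_sq scaler_sumr.
rewrite exchange_big /=; apply: eq_bigr => i _; rewrite /mulX scaler_sumr.
by apply: eq_bigr => S _; rewrite !scalerA mulrC.
Qed.

Lemma mulX_sum_sq (C : 'M[K]_m) j (v : V) : B *m C = 1%:M ->
  \sum_i C i j *: mulX i (mulX i v) = mulX j v.
Proof.
move=> BC.
have -> : \sum_i C i j *: mulX i (mulX i v) = \sum_k (B *m C) k j *: mulX k v.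
  under eq_bigr => i _ do rewrite mulX_sq scaler_sumr.
  rewrite exchange_big /=; apply: eq_bigr => k _; rewrite mxE scaler_suml.
  by apply: eq_bigr => i _; rewrite scalerA mulrC.
rewrite BC (bigD1 j) //= big1 ?addr0 => [|k kj]; rewrite mxE.
  by rewrite eqxx mulr1n scale1r.
by rewrite (negbTE kj) mulr0n scale0r.
Qed.

Lemma monom_setD1 j (S : T) : j \in S -> monom S = mulX j (monom (S :\ j)).
Proof. by move=> jS; rewrite mulX_monom mulx_notin ?setD1K // in_setD1 eqxx. Qed.

Lemma mulx_rec_set0 d j (S : T) : mulx_rec d j S set0 = 0.
Proof.
elim: d j S => [|d IHd] j S /=; last case: ifP => _.
- by rewrite ffunE; case: eqP => // /setP/(_ j); rewrite !inE eqxx.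
- by rewrite sum_ffunE big1 // => i _; rewrite ffunE IHd scaler0.
by rewrite ffunE; case: eqP => // /setP/(_ j); rewrite !inE eqxx.
Qed.

Lemma mulx_set0 j (S : T) : mulx j S set0 = 0.
Proof. exact: mulx_rec_set0. Qed.

Lemma mulX_set0 j (v : V) : mulX j v set0 = 0.
Proof. by rewrite sum_ffunE big1 // => S _; rewrite ffunE mulx_set0 scaler0. Qed.

Definition nonempty_sets : {pred T} := [pred S : T | S != set0].
Local Notation N := #|nonempty_sets|.

(* Coordinates on the ideal I; [mulx_mx j] is the matrix of x_j acting on I. *)
Definition coords (v : V) : 'cV[K]_N := \col_s v (enum_val s).

Lemma coords_is_linear : linear coords.
Proof. by move=> a v w; apply/colP => s; rewrite !mxE !ffunE. Qed.

HB.instance Definition _ :=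
  GRing.isLinear.Build K V 'cV[K]_N *:%R coords coords_is_linear.

Definition mulx_mx j : 'M[K]_N := \matrix_(s, t) mulx j (enum_val t) (enum_val s).

Lemma card_nonempty_sets_gt0 : (0 < m)%N -> (0 < N)%N.
Proof.
move=> m_gt0; apply/card_gt0P; exists [set Ordinal m_gt0]; rewrite inE.
by apply/set0Pn; exists (Ordinal m_gt0); rewrite set11.
Qed.

Lemma sum_nonempty_sets (F : T -> K) :
  F set0 = 0 -> \sum_(U : T) F U = \sum_(t < N) F (enum_val t).
Proof.
move=> F0; rewrite (bigD1 set0) //= F0 add0r -big_enum_val /=.
by apply: eq_bigl => U; rewrite inE.
Qed.

Lemma mulx_mx_coords j (w : V) :
  w set0 = 0 -> mulx_mx j *m coords w = coords (mulX j w).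
Proof.
move=> w0; apply/colP => s; rewrite !mxE sum_ffunE sum_nonempty_sets.
  by apply: eq_bigr => t _; rewrite !mxE ffunE mulrC.
by rewrite ffunE w0 scale0r.
Qed.

Lemma mulx_mx_mul j k :
  mulx_mx j *m mulx_mx k =
  \matrix_(s, t) mulX j (mulx k (enum_val t)) (enum_val s).
Proof.
apply/matrixP => s t.
have := mulx_mx_coords j (mulx_set0 k (enum_val t)).
move/(congr1 (fun c : 'cV_N => c s 0)).
by rewrite !mxE => <-; apply: eq_bigr => u _; rewrite !mxE.
Qed.

Lemma mulx_mxC j k : mulx_mx j *m mulx_mx k = mulx_mx k *m mulx_mx j.
Proof. by rewrite !mulx_mx_mul; apply/matrixP => s t; rewrite !mxE mulx_comm. Qed.

Lemma mulx_mx_sq j : mulx_mx j *m mulx_mx j = \sum_i B i j *: mulx_mx i.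
Proof.
rewrite mulx_mx_mul; apply/matrixP => s t; rewrite mxE mulx_sq summxE sum_ffunE.
by apply: eq_bigr => i _; rewrite !mxE ffunE.
Qed.

Lemma coords_monom t : coords (monom (enum_val t)) = delta_mx t 0.
Proof. by apply/colP => s; rewrite !mxE ffunE (inj_eq enum_val_inj) andbT. Qed.

Lemma mulx_mx_left_kernel (C : 'M[K]_m) : B *m C = 1%:M ->
  forall p : 'rV_N, (forall i, p *m mulx_mx i = 0) -> p = 0.
Proof.
move=> BC p pM0.
have pX i (w : V) : w set0 = 0 -> p *m coords (mulX i w) = 0.
  by move=> w0; rewrite -mulx_mx_coords // mulmxA pM0 mul0mx.
apply/rowP => t; rewrite mxE.
have /set0Pn[j jS] : enum_val t != set0 := enum_valP t.
have -> : p 0 t = (p *m coords (monom (enum_val t))) 0 0.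
  by rewrite coords_monom -colE mxE.
rewrite (monom_setD1 jS) -(mulX_sum_sq _ _ BC) linear_sum mulmx_sumr summxE.
rewrite big1 // => i _.
by rewrite linearZ -scalemxAr pX ?mulX_set0 // scaler0 mxE.
Qed.

End QuadraticModel.

Theorem theorem3p5 (R : realType) (n : nat) (A : 'M[R[i]]_n.+1) :
  evo_regular A ->
  exists u : 'rV[R[i]]_n.+1, u != 0 /\ evo_mul A u u = u.
Proof.
move=> A_unit; set B := invmx A.
have [u u_neq0 u_sq] := quadratic_root_of_comm_mx
  (card_nonempty_sets_gt0 (ltn0Sn n)) (@mulx_mxC _ _ B) (@mulx_mx_sq _ _ B)
  (mulx_mx_left_kernel (mulVmx A_unit)).
by exists u; split; rewrite // /evo_mul u_sq -mulmxA mulVmx // mulmx1.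
Qed.
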